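(* Let $(X,d)$ be an ultrametric space such that for some $\varepsilon>0$ all balls of radius $\varepsilon$ are compact, and let $f:X\to X$ be an invertible uniformly continuous map. (i) If $f^{-1}$ is an eventually $1$-Lipschitz map, then $f$ has the shadowing property. (ii) If $f^{-1}$ is uniformly continuous and $f$ is an eventual similarity, then $f$ has the shadowing property.
   Context: An ultrametric space satisfies $d(x,z)\le\max\{d(x,y),d(y,z)\}$. A map $g$ is eventually Lipschitz $L$ if there is $\varepsilon>0$ with $d(g(x),g(y))\le L\,d(x,y)$ whenever $d(x,y)<\varepsilon$. $f$ is an eventual similarity if there are $\varepsilon>0$ and $s>0$ with $d(f(x),f(y))=s\,d(x,y)$ whenever $d(x,y)<\varepsilon$. Shadowing property: for every $\varepsilon>0$ there is $\delta>0$ such that every sequence $(x_n)_{n\in\mathbb{N}}$ with $d(f(x_n),x_{n+1})<\delta$ for all $n$ admits $x$ with $d(f^n(x),x_n)<\varepsilon$ for all $n$. *)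

From Stdlib Require Import Reals.
Open Scope R_scope.

Definition is_ultrametric {X : Type} (d : X -> X -> R) : Prop :=
  (forall x y, 0 <= d x y) /\
  (forall x y, d x y = 0 <-> x = y) /\
  (forall x y, d x y = d y x) /\
  (forall x y z, d x z <= Rmax (d x y) (d y z)).

Definition d_open {X : Type} (d : X -> X -> R) (U : X -> Prop) : Prop :=
  forall x, U x -> exists r, 0 < r /\ forall y, d x y < r -> U y.

Definition d_compact {X : Type} (d : X -> X -> R) (K : X -> Prop) : Prop :=
  forall (I : Type) (U : I -> X -> Prop),
    (forall i, d_open d (U i)) ->
    (forall x, K x -> exists i, U i x) ->
    exists l : list I, forall x, K x -> exists i, List.In i l /\ U i x.

Definition cball {X : Type} (d : X -> X -> R) (x : X) (r : R) : X -> Prop :=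
  fun y => d x y <= r.

Definition unif_continuous {X : Type} (d : X -> X -> R) (f : X -> X) : Prop :=
  forall e, 0 < e -> exists delta, 0 < delta /\
    forall x y, d x y < delta -> d (f x) (f y) < e.

Definition eventually_lipschitz {X : Type} (d : X -> X -> R) (g : X -> X) (L : R) : Prop :=
  exists e, 0 < e /\ forall x y, d x y < e -> d (g x) (g y) <= L * d x y.

Definition eventual_similarity {X : Type} (d : X -> X -> R) (f : X -> X) : Prop :=
  exists e s, 0 < e /\ 0 < s /\ forall x y, d x y < e -> d (f x) (f y) = s * d x y.

Definition shadowing {X : Type} (d : X -> X -> R) (f : X -> X) : Prop :=
  forall e, 0 < e -> exists delta, 0 < delta /\
    forall xs : nat -> X, (forall n, d (f (xs n)) (xs (S n)) < delta) ->
      exists x, forall n, d (Nat.iter n f x) (xs n) < e.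

(* In an ultrametric space, a map that does not expand distances below scale
   delta keeps every delta-pseudo-orbit within delta of the orbit of its first
   point: by the strong triangle inequality the errors do not accumulate.
   (i) Applied to f^-1, this keeps the backward orbits f^-N(x_N) of a pseudo-orbit
   in a compact ball around x_0 and makes f^(N-n)(f^-N(x_N)) delta-close to x_n;
   a cluster point y of the f^-N(x_N), with uniform continuity of f^n, then gives
   d(f^n(y), x_n) < eps.
   (ii) An eventual similarity of ratio s <= 1 is eventually non-expanding, so a
   pseudo-orbit is shadowed by its own first point; if s >= 1, uniform continuity
   of f^-1 makes f^-1 eventually non-expanding, and (i) applies. *)
From Stdlib Require Import Reals Lra Lia Classical List.
Open Scope R_scope.

Lemma iter_cancel {X : Type} (f g : X -> X) :
  (forall x, f (g x) = x) -> forall n x, Nat.iter n f (Nat.iter n g x) = x.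
Proof.
  intros Hfg n. induction n as [|n IH]; intro x; [reflexivity|].
  rewrite Nat.iter_succ_r. simpl. rewrite Hfg. apply IH.
Qed.

Lemma unif_continuous_iter {X : Type} (d : X -> X -> R) (f : X -> X) :
  unif_continuous d f -> forall n, unif_continuous d (fun x => Nat.iter n f x).
Proof.
  intros Hf n. induction n as [|n IH]; intros e He.
  - exists e. auto.
  - destruct (Hf e He) as (de & Hde & Hcont).
    destruct (IH de Hde) as (rho & Hrho & Hiter).
    exists rho. split; [exact Hrho|]. intros x y Hxy. apply Hcont, Hiter, Hxy.
Qed.

Section Ultrametric.
Variable X : Type.
Variable d : X -> X -> R.
Hypothesis Hu : is_ultrametric d.

Lemma d_nonneg x y : 0 <= d x y.
Proof. apply Hu. Qed.

Lemma d_self x : d x x = 0.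
Proof. apply Hu. reflexivity. Qed.

Lemma d_sym x y : d x y = d y x.
Proof. apply Hu. Qed.

Lemma d_lt_trans x y z r : d x y < r -> d y z < r -> d x z < r.
Proof.
  intros Hxy Hyz. destruct Hu as (_ & _ & _ & Hultra).
  eapply Rle_lt_trans; [apply (Hultra x y z)|]. apply Rmax_lub_lt; assumption.
Qed.

Lemma compact_cluster_point (K : X -> Prop) (ys : nat -> X) :
  d_compact d K -> (forall n, K (ys n)) ->
  exists y, forall r, 0 < r -> forall M, exists N, (M <= N)%nat /\ d (ys N) y < r.
Proof.
  intros HK Hys. apply NNPP. intro Hnone.
  (* A ball around y from which the sequence eventually stays away; with no cluster
     point these cover K, and a finite subcover contradicts the sequence's tail. *)
  set (U := fun (i : X * R * nat) z =>
    let '(y, r, M) := i in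
    0 < r /\ (forall N, (M <= N)%nat -> r <= d (ys N) y) /\ d y z < r).
  destruct (HK _ U) as [l Hcover].
  - intros [[y r] M] z (Hr & Hfar & Hz). exists r. split; [exact Hr|].
    intros w Hw. repeat split; try assumption. exact (d_lt_trans y z w r Hz Hw).
  - intros x _.
    assert (Hfar : exists r M, 0 < r /\ forall N, (M <= N)%nat -> r <= d (ys N) x).
    { apply NNPP. intro Hnear. apply Hnone. exists x. intros r Hr M.
      apply NNPP. intro Htail. apply Hnear. exists r, M. split; [exact Hr|].
      intros N HN. apply Rnot_lt_le. intro Hlt. apply Htail. eauto. }
    destruct Hfar as (r & M & Hr & Hfar).
    exists (x, r, M). simpl. rewrite d_self. auto.
  - set (M := list_max (map snd l)).
    destruct (Hcover (ys M) (Hys M)) as [[[y r] Mi] [Hin (Hr & Hfar & Hy)]].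
    assert (HMi : (Mi <= M)%nat).
    { assert (Hall : Forall (fun k => (k <= M)%nat) (map snd l))
        by (apply list_max_le; constructor).
      rewrite Forall_forall in Hall. apply Hall.
      change Mi with (snd (y, r, Mi)). apply in_map, Hin. }
    specialize (Hfar M HMi). rewrite d_sym in Hfar. lra.
Qed.

Lemma orbit_tracks_pseudo_orbit (g : X -> X) (delta : R) (ys : nat -> X) n :
  0 < delta ->
  (forall x y, d x y < delta -> d (g x) (g y) <= d x y) ->
  (forall m, (m < n)%nat -> d (g (ys m)) (ys (S m)) < delta) ->
  d (Nat.iter n g (ys 0%nat)) (ys n) < delta.
Proof.
  intros Hdelta Hg. induction n as [|n IH]; intro Hstep.
  - simpl. rewrite d_self. exact Hdelta.
  - assert (Hn : d (Nat.iter n g (ys 0%nat)) (ys n) < delta) by (apply IH; auto).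
    simpl. apply (d_lt_trans _ (g (ys n))); [|apply Hstep; lia].
    eapply Rle_lt_trans; [apply Hg|]; exact Hn.
Qed.

Lemma shadowing_of_eventually_nonexpanding (f : X -> X) :
  eventually_lipschitz d f 1 -> shadowing d f.
Proof.
  intros (eta & Heta & Hlip) eps Heps.
  exists (Rmin eps eta). split; [apply Rmin_glb_lt; assumption|].
  intros xs Hxs. exists (xs 0%nat). intro n.
  apply (Rlt_le_trans _ (Rmin eps eta)); [|apply Rmin_l].
  apply orbit_tracks_pseudo_orbit; auto.
  - apply Rmin_glb_lt; assumption.
  - intros x y Hxy. rewrite <- (Rmult_1_l (d x y)).
    apply Hlip. pose proof (Rmin_r eps eta). lra.
Qed.

Lemma backward_orbit_tracks_pseudo_orbit (f finv : X -> X) (delta : R) (xs : nat -> X) :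
  0 < delta ->
  (forall x, finv (f x) = x) ->
  (forall x y, d x y < delta -> d (finv x) (finv y) <= d x y) ->
  (forall n, d (f (xs n)) (xs (S n)) < delta) ->
  forall k n, d (Nat.iter k finv (xs (n + k)%nat)) (xs n) < delta.
Proof.
  intros Hdelta Hinv Hg Hxs k n.
  pose (ys := fun m => xs (n + k - m)%nat).
  replace (xs (n + k)%nat) with (ys 0%nat) by (unfold ys; f_equal; lia).
  replace (xs n) with (ys k) by (unfold ys; f_equal; lia).
  apply orbit_tracks_pseudo_orbit; auto.
  intros m Hm. unfold ys.
  replace (n + k - m)%nat with (S (n + k - S m)) by lia.
  set (j := (n + k - S m)%nat).
  rewrite <- (Hinv (xs j)), d_sym.
  eapply Rle_lt_trans; [apply Hg|]; apply Hxs.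
Qed.

Lemma shadowing_of_inverse_eventually_nonexpanding (f finv : X -> X) :
  (exists e, 0 < e /\ forall x, d_compact d (cball d x e)) ->
  (forall x, finv (f x) = x) -> (forall x, f (finv x) = x) ->
  unif_continuous d f -> eventually_lipschitz d finv 1 -> shadowing d f.
Proof.
  intros (ec & Hec & Hcompact) Hinv Hinv' Hf (eta & Heta & Hlip) eps Heps.
  set (delta := Rmin eps (Rmin ec eta)).
  assert (Hdelta : 0 < delta) by (repeat apply Rmin_glb_lt; assumption).
  assert (Hdelta_eps : delta <= eps) by apply Rmin_l.
  assert (Hdelta_ec : delta <= ec)
    by (unfold delta; pose proof (Rmin_r eps (Rmin ec eta)); pose proof (Rmin_l ec eta); lra).
  assert (Hdelta_eta : delta <= eta)
    by (unfold delta; pose proof (Rmin_r eps (Rmin ec eta)); pose proof (Rmin_r ec eta); lra).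
  exists delta. split; [exact Hdelta|]. intros xs Hxs.
  assert (Hnonexp : forall x y, d x y < delta -> d (finv x) (finv y) <= d x y).
  { intros x y Hxy. rewrite <- (Rmult_1_l (d x y)). apply Hlip. lra. }
  pose proof (backward_orbit_tracks_pseudo_orbit f finv delta xs Hdelta Hinv Hnonexp Hxs)
    as Hback.
  destruct (compact_cluster_point _ (fun N => Nat.iter N finv (xs N)) (Hcompact (xs 0%nat)))
    as [y Hy].
  { intro N. unfold cball. rewrite d_sym.
    specialize (Hback N 0%nat). simpl in Hback. lra. }
  exists y. intro n.
  destruct (unif_continuous_iter d f Hf n delta Hdelta) as (rho & Hrho & Hfn).
  destruct (Hy rho Hrho n) as (N & HnN & HyN).
  destruct (Nat.le_exists_sub n N HnN) as (k & -> & _).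
  specialize (Hfn _ _ HyN).
  rewrite Nat.add_comm, Nat.iter_add, iter_cancel in Hfn by exact Hinv'.
  apply (Rlt_le_trans _ delta); [|exact Hdelta_eps].
  apply (d_lt_trans _ (Nat.iter k finv (xs (n + k)%nat))).
  - rewrite d_sym. exact Hfn.
  - apply Hback.
Qed.

Lemma eventual_similarity_nonexpanding_or_inverse (f finv : X -> X) :
  (forall x, f (finv x) = x) ->
  unif_continuous d finv -> eventual_similarity d f ->
  eventually_lipschitz d f 1 \/ eventually_lipschitz d finv 1.
Proof.
  intros Hinv' Hfinv (e & s & He & Hs & Hsim).
  destruct (Rle_or_lt s 1) as [Hs1|Hs1].
  - left. exists e. split; [exact He|]. intros x y Hxy.
    rewrite Hsim by exact Hxy. pose proof (d_nonneg x y). nra.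
  - right. destruct (Hfinv e He) as (eta & Heta & Hcont).
    exists eta. split; [exact Heta|]. intros x y Hxy.
    pose proof (Hsim _ _ (Hcont x y Hxy)) as Hxy'. rewrite !Hinv' in Hxy'.
    pose proof (d_nonneg (finv x) (finv y)). nra.
Qed.

End Ultrametric.

Theorem corollary5p4 (X : Type) (d : X -> X -> R) (f finv : X -> X) :
  is_ultrametric d ->
  (exists e, 0 < e /\ forall x, d_compact d (cball d x e)) ->
  (forall x, finv (f x) = x) -> (forall x, f (finv x) = x) ->
  unif_continuous d f ->
  (eventually_lipschitz d finv 1 -> shadowing d f) /\
  (unif_continuous d finv -> eventual_similarity d f -> shadowing d f).
Proof.
  intros Hu Hcompact Hinv Hinv' Hf. split.
  - exact (shadowing_of_inverse_eventually_nonexpanding X d Hu f finv Hcompact Hinv Hinv' Hf).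
  - intros Hfinv Hsim.
    destruct (eventual_similarity_nonexpanding_or_inverse X d Hu f finv Hinv' Hfinv Hsim)
      as [Hlip | Hlip_inv].
    + exact (shadowing_of_eventually_nonexpanding X d Hu f Hlip).
    + exact (shadowing_of_inverse_eventually_nonexpanding X d Hu f finv
               Hcompact Hinv Hinv' Hf Hlip_inv).
Qed.
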